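(* Let $\mathsf{CS}$ be a constant specification for $\mathsf{LPC}^+$ and let $\mathcal M=(W,W_N,R_{Fm},R_{Tm},V)$ be the canonical relational model for $\mathsf{LPC}^+_{\mathsf{CS}}$. Then for every formula $\phi$ and every $\Gamma\in W$: $\mathcal M,\Gamma\models\phi$ iff $\phi\in\Gamma$.
   Context: Language: countable sets $\mathsf{Const}$, $\mathsf{Var}$, $\mathsf{Prop}$; terms $t ::= c \mid x \mid t\cdot t \mid t+t \mid\ !t$; formulas $\phi ::= p \mid \neg\phi \mid \phi\wedge\phi \mid \phi\supset\phi \mid \phi>\phi \mid t{:}\phi$; $\mathsf{Tm},\mathsf{Fm}$ the sets of terms and formulas; $\bot:=\chi\wedge\neg\chi$ for a fixed $\chi$. Axiom schemes of $\mathsf{LPC}^+$: (A1) all instances of classical tautologies; (A2) $(\phi>(\psi\supset\chi))\supset((\phi>\psi)\supset(\phi>\chi))$; (A3) $\phi>\phi$; (A4) $(\phi>\psi)\supset(\phi\supset\psi)$; (A5) $(s{:}(\phi>\psi)\wedge t{:}\phi) > (s\cdot t){:}\psi$; (A6) $s{:}\phi > (s+t){:}\phi$; (A7) $t{:}\phi>(s+t){:}\phi$; (A8) $t{:}\phi>\phi$; (A9) $t{:}\phi > (!t){:}t{:}\phi$. A constant specification $\mathsf{CS}$ is a set of $c{:}\phi$ with $c\in\mathsf{Const}$, $\phi$ an instance of (A1)–(A9). $\mathsf{LPC}^+_{\mathsf{CS}}$: axioms (A1)–(A9) and $\mathsf{CS}$; rules (MP) and (RCN): from $\psi$ infer $\phi>\psi$.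 $T\vdash\phi$ iff $\vdash(\psi_1\wedge\cdots\wedge\psi_n)\supset\phi$ for some $\psi_i\in T$; $T$ consistent iff $T\nvdash\bot$; maximal consistent sets as usual. Relational models $(W,W_N,R_{Fm},R_{Tm},V)$: $W_N\subseteq W$ nonempty; $R_\phi\subseteq W_N\times W_N$ for each formula; $R_t\subseteq W\times W$ for each term; $V(w)\subseteq\mathsf{Prop}$ for $w\in W_N$, $V(w)\subseteq\mathsf{Fm}$ for $w\in W\setminus W_N$. Truth: at non-normal $w$, $w\models\phi$ iff $\phi\in V(w)$; at normal $w$: $p$ iff $p\in V(w)$, $\neg,\wedge,\supset$ classical, $\phi>\psi$ iff $R_\phi(w)\subseteq[\psi]$, $t{:}\phi$ iff $R_t(w)\subseteq[\phi]$, with $[\phi]=\{w\in W: w\models\phi\}$. The canonical relational model for $\mathsf{LPC}^+_{\mathsf{CS}}$: $W$ is the set of all subsets of $\mathsf{Fm}$; $W_N$ is the set of maximal $\mathsf{LPC}^+_{\mathsf{CS}}$-consistent sets; for $\Gamma,\Delta\in W_N$, $\Gamma R_\phi\Delta$ iff $\Gamma/\phi\subseteq\Delta$ where $\Gamma/\phi=\{\psi:\phi>\psi\in\Gamma\}$; for $\Gamma,\Delta\in W$, $\Gamma R_t\Delta$ iff $\Gamma/t\subseteq\Delta$ where $\Gamma/t=\{\psi: t{:}\psi\in\Gamma\}$; $V(\Gamma)=\Gamma$ for $\Gamma\in W\setminus W_N$ and $V(\Gamma)=\mathsf{Prop}\cap\Gamma$ for $\Gamma\in W_N$. *)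

From Stdlib Require Import List.
Import ListNotations.

(* Const, Var, Prop are countable: represented by nat. *)
Inductive Tm : Type :=
| TConst : nat -> Tm
| TVar : nat -> Tm
| TApp : Tm -> Tm -> Tm
| TSum : Tm -> Tm -> Tm
| TBang : Tm -> Tm.

Inductive Fm : Type :=
| Atom : nat -> Fm
| Neg : Fm -> Fm
| And : Fm -> Fm -> Fm
| Imp : Fm -> Fm -> Fm
| Cond : Fm -> Fm -> Fm
| Just : Tm -> Fm -> Fm.

(* bot := chi /\ ~chi for a fixed chi; we fix chi := Atom 0. *)
Definition chi0 : Fm := Atom 0.
Definition Bot : Fm := And chi0 (Neg chi0).

(* Classical tautology instances: formulas true under every boolean valuation
   of their maximal non-Boolean subformulas (atoms, phi > psi, t:phi). *)
Fixpoint beval (v : Fm -> bool) (f : Fm) : bool :=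
  match f with
  | Neg a => negb (beval v a)
  | And a b => andb (beval v a) (beval v b)
  | Imp a b => orb (negb (beval v a)) (beval v b)
  | _ => v f
  end.

Definition Tautology (f : Fm) : Prop := forall v, beval v f = true.

Inductive AxiomInst : Fm -> Prop :=
| A1 : forall f, Tautology f -> AxiomInst f
| A2 : forall p q r,
    AxiomInst (Imp (Cond p (Imp q r)) (Imp (Cond p q) (Cond p r)))
| A3 : forall p, AxiomInst (Cond p p)
| A4 : forall p q, AxiomInst (Imp (Cond p q) (Imp p q))
| A5 : forall s t p q,
    AxiomInst (Cond (And (Just s (Cond p q)) (Just t p)) (Just (TApp s t) q))
| A6 : forall s t p, AxiomInst (Cond (Just s p) (Just (TSum s t) p))
| A7 : forall s t p, AxiomInst (Cond (Just t p) (Just (TSum s t) p))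
| A8 : forall t p, AxiomInst (Cond (Just t p) p)
| A9 : forall t p, AxiomInst (Cond (Just t p) (Just (TBang t) (Just t p))).

Definition is_CS (CS : Fm -> Prop) : Prop :=
  forall f, CS f -> exists c p, f = Just (TConst c) p /\ AxiomInst p.

Inductive Prov (CS : Fm -> Prop) : Fm -> Prop :=
| P_ax : forall f, AxiomInst f -> Prov CS f
| P_cs : forall f, CS f -> Prov CS f
| P_mp : forall p q, Prov CS (Imp p q) -> Prov CS p -> Prov CS q
| P_rcn : forall p q, Prov CS q -> Prov CS (Cond p q).

Definition conjl (f : Fm) (rest : list Fm) : Fm := fold_left And rest f.

Definition Derives (CS : Fm -> Prop) (T : Fm -> Prop) (f : Fm) : Prop :=
  Prov CS f \/
  exists g rest, T g /\ Forall T rest /\ Prov CS (Imp (conjl g rest) f).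

Definition Consistent (CS : Fm -> Prop) (T : Fm -> Prop) : Prop :=
  ~ Derives CS T Bot.

Definition MaxConsistent (CS : Fm -> Prop) (T : Fm -> Prop) : Prop :=
  Consistent CS T /\
  forall T' : Fm -> Prop, (forall f, T f -> T' f) -> Consistent CS T' ->
    forall f, T' f -> T f.

(* Relational models (W, W_N, R_Fm, R_Tm, V). V w is a set of formulas;
   at normal worlds only its atoms matter. *)
Record RelModel : Type := {
  world : Type;
  normal : world -> Prop;
  RF : Fm -> world -> world -> Prop;
  RT : Tm -> world -> world -> Prop;
  Val : world -> Fm -> Prop
}.

Fixpoint sat (M : RelModel) (w : world M) (f : Fm) : Prop :=
  match f with
  | Atom p => Val M w (Atom p)
  | Neg a => (normal M w /\ ~ sat M w a) \/ (~ normal M w /\ Val M w f)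
  | And a b => (normal M w /\ sat M w a /\ sat M w b) \/ (~ normal M w /\ Val M w f)
  | Imp a b => (normal M w /\ (sat M w a -> sat M w b)) \/ (~ normal M w /\ Val M w f)
  | Cond a b => (normal M w /\ forall u, RF M a w u -> sat M u b)
                \/ (~ normal M w /\ Val M w f)
  | Just t a => (normal M w /\ forall u, RT M t w u -> sat M u a)
                \/ (~ normal M w /\ Val M w f)
  end.

Definition canonical_model (CS : Fm -> Prop) : RelModel := {|
  world := Fm -> Prop;
  normal := MaxConsistent CS;
  RF := fun p G D => MaxConsistent CS G /\ MaxConsistent CS D /\
                     (forall q, G (Cond p q) -> D q);
  RT := fun t G D => forall q, G (Just t q) -> D q;
  Val := fun G f => (MaxConsistent CS G /\ (exists p, f = Atom p) /\ G f)
                    \/ (~ MaxConsistent CS G /\ G f)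
|}.

(* At a non-normal world truth is membership by definition, so only maximal
   consistent Γ matter. There the Boolean clauses are the usual closure
   properties of maximal consistent sets. For [t:φ] the canonical [R_t] relates
   Γ to EVERY set of formulas containing Γ/t, in particular to Γ/t itself, so
   if Γ ⊨ t:φ the induction hypothesis at the world Γ/t already gives
   t:φ ∈ Γ. For [φ > ψ] with ψ ∈ Δ for all maximal consistent Δ ⊇ Γ/φ, the set
   Γ/φ ∪ {¬ψ} must be inconsistent (Lindenbaum); since Γ/φ is closed under
   finite conjunctions by (A2) and (RCN), a derivation of ψ from Γ/φ lifts to
   a derivation of φ > ψ from Γ. *)
From Stdlib Require Import List Bool Arith Classical Cantor.
Import ListNotations.

Definition Top : Fm := Imp Bot Bot.

Fixpoint bigconj (l : list Fm) : Fm :=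
  match l with [] => Top | x :: l => And x (bigconj l) end.

Lemma beval_Top v : beval v Top = true.
Proof. unfold Top, Bot, chi0; simpl. destruct (v (Atom 0)); reflexivity. Qed.

Lemma beval_Bot v : beval v Bot = false.
Proof. unfold Bot, chi0; simpl. destruct (v (Atom 0)); reflexivity. Qed.

Lemma beval_bigconj v l : beval v (bigconj l) = forallb (beval v) l.
Proof. induction l as [|x l IH]; simpl; [apply beval_Top | now rewrite IH]. Qed.

Lemma beval_conjl v g rest :
  beval v (conjl g rest) = beval v g && forallb (beval v) rest.
Proof.
  unfold conjl; revert g; induction rest as [|x rest IH]; intros g; simpl.
  - now rewrite andb_true_r.
  - now rewrite IH, andb_assoc.
Qed.

(* Decides goals and hypotheses about [beval] by case analysis on the truth
   values of the maximal non-Boolean subformulas. *)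
Ltac bool_taut :=
  repeat intro;
  repeat match goal with H : context [beval _ _] |- _ => revert H end;
  cbn [beval bigconj];
  rewrite ?beval_bigconj, ?beval_conjl, ?beval_Top, ?beval_Bot;
  repeat match goal with
         | |- context [beval ?v ?x] => destruct (beval v x)
         | |- context [forallb ?f ?l] => destruct (forallb f l)
         end; simpl; auto; try discriminate.

Lemma Prov_taut CS f : Tautology f -> Prov CS f.
Proof. intros H. now apply P_ax, A1. Qed.

Lemma Prov_taut_mp CS a b :
  Prov CS a -> (forall v, beval v a = true -> beval v b = true) -> Prov CS b.
Proof.
  intros Ha Hab. apply P_mp with a; auto. apply Prov_taut. intros v.
  specialize (Hab v). revert Hab. bool_taut.
Qed.

(** * Derivability from a set of hypotheses *)

Definition Der CS (T : Fm -> Prop) f :=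
  exists l, Forall T l /\ Prov CS (Imp (bigconj l) f).

Lemma Derives_iff_Der CS T f : Derives CS T f <-> Der CS T f.
Proof.
  split.
  - intros [Hf | [g [rest [Hg [Hrest Hp]]]]].
    + exists []; split; auto. apply Prov_taut_mp with f; auto. bool_taut.
    + exists (g :: rest); split; auto.
      apply Prov_taut_mp with (Imp (conjl g rest) f); auto. bool_taut.
  - intros [[|g rest] [Hl Hp]].
    + left. apply P_mp with Top; [exact Hp | apply Prov_taut; intros v; apply beval_Top].
    + inversion Hl; subst. right. exists g, rest. repeat split; auto.
      apply Prov_taut_mp with (Imp (bigconj (g :: rest)) f); auto. bool_taut.
Qed.

Lemma Der_weaken CS (T T' : Fm -> Prop) f :
  (forall x, T x -> T' x) -> Der CS T f -> Der CS T' f.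
Proof. intros H [l [Hl Hp]]. exists l; split; auto. eapply Forall_impl; eauto. Qed.

Lemma Der_Prov CS T f : Prov CS f -> Der CS T f.
Proof. intros H. exists []; split; auto. apply Prov_taut_mp with f; auto. bool_taut. Qed.

Lemma Der_mem CS (T : Fm -> Prop) f : T f -> Der CS T f.
Proof. intros H. exists [f]; split; auto. apply Prov_taut. bool_taut. Qed.

Lemma Der_mp CS T a b : Der CS T (Imp a b) -> Der CS T a -> Der CS T b.
Proof.
  intros [l1 [H1 P1]] [l2 [H2 P2]]. exists (l1 ++ l2); split.
  - now apply Forall_app.
  - apply P_mp with (Imp (bigconj l2) a); auto.
    apply P_mp with (Imp (bigconj l1) (Imp a b)); auto.
    apply Prov_taut. intros v. cbn [beval]. rewrite !beval_bigconj, forallb_app. bool_taut.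
Qed.

Lemma Der_taut_mp CS T a b :
  Der CS T a -> (forall v, beval v a = true -> beval v b = true) -> Der CS T b.
Proof.
  intros Ha Hab. apply Der_mp with a; auto. apply Der_Prov, Prov_taut. intros v.
  specialize (Hab v). revert Hab. bool_taut.
Qed.

Lemma Der_taut_mp2 CS T a b c : Der CS T a -> Der CS T b ->
  (forall v, beval v a = true -> beval v b = true -> beval v c = true) -> Der CS T c.
Proof.
  intros Ha Hb Habc. apply Der_mp with b; auto. apply Der_mp with a; auto.
  apply Der_Prov, Prov_taut. intros v. specialize (Habc v). revert Habc. bool_taut.
Qed.

Lemma Der_deduction CS (T : Fm -> Prop) a b :
  Der CS (fun x => T x \/ x = a) b -> Der CS T (Imp a b).
Proof.
  intros [l [Hl Hp]].
  assert (Hdrop : exists l', Forall T l' /\ forall v,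
            beval v (bigconj l') = true -> beval v a = true ->
            beval v (bigconj l) = true).
  { clear Hp. induction l as [|x l IH].
    - exists []; auto.
    - inversion Hl as [|? ? Hx Hl']; subst.
      destruct (IH Hl') as [l' [HT Hv]]. destruct Hx as [Hx | ->].
      + exists (x :: l'); split; auto. intros v. specialize (Hv v). revert Hv. bool_taut.
      + exists l'; split; auto. intros v. specialize (Hv v). revert Hv. bool_taut. }
  destruct Hdrop as [l' [HT Hv]]. exists l'; split; auto.
  apply Prov_taut_mp with (Imp (bigconj l) b); auto.
  intros v. specialize (Hv v). revert Hv. bool_taut.
Qed.

Lemma Consistent_iff CS T : Consistent CS T <-> ~ Der CS T Bot.
Proof. unfold Consistent. now rewrite Derives_iff_Der. Qed.

Lemma Consistent_sub CS (T T' : Fm -> Prop) :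
  (forall x, T x -> T' x) -> Consistent CS T' -> Consistent CS T.
Proof. rewrite !Consistent_iff. intros H H' HD. apply H'. eapply Der_weaken; eauto. Qed.

(** * Maximal consistent sets *)

Section MaxConsistent.

Variable CS : Fm -> Prop.
Variable G : Fm -> Prop.
Hypothesis HG : MaxConsistent CS G.

Lemma MC_not_Der_Bot : ~ Der CS G Bot.
Proof. apply Consistent_iff, HG. Qed.

Lemma MC_Der_closed f : Der CS G f -> G f.
Proof.
  intros Hf. apply (proj2 HG (fun x => G x \/ x = f)); auto.
  apply Consistent_iff. intros HD. apply MC_not_Der_Bot.
  exact (Der_mp _ _ _ _ (Der_deduction _ _ _ _ HD) Hf).
Qed.

Lemma MC_Neg a : G (Neg a) <-> ~ G a.
Proof.
  split.
  - intros Hn Ha. apply MC_not_Der_Bot.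
    apply Der_taut_mp2 with (Neg a) a; try now apply Der_mem. bool_taut.
  - intros Ha. apply MC_Der_closed.
    destruct (classic (Consistent CS (fun x => G x \/ x = a))) as [Hc | Hc].
    + exfalso. apply Ha, (proj2 HG (fun x => G x \/ x = a)); auto.
    + assert (HD : Der CS (fun x => G x \/ x = a) Bot).
      { apply NNPP. intros HD. now apply Hc, Consistent_iff. }
      apply Der_taut_mp with (Imp a Bot); [now apply Der_deduction | bool_taut].
Qed.

Lemma MC_And a b : G (And a b) <-> G a /\ G b.
Proof.
  split.
  - intros H; split; apply MC_Der_closed, Der_taut_mp with (And a b);
      try (now apply Der_mem); bool_taut.
  - intros [Ha Hb]. apply MC_Der_closed, Der_taut_mp2 with a b;
      try (now apply Der_mem); bool_taut.
Qed.

Lemma MC_Imp a b : G (Imp a b) <-> (G a -> G b).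
Proof.
  split.
  - intros H Ha. apply MC_Der_closed, Der_mp with a; now apply Der_mem.
  - intros H. apply MC_Der_closed. destruct (classic (G a)) as [Ha | Ha].
    + apply Der_taut_mp with b; [apply Der_mem; auto | bool_taut].
    + apply Der_taut_mp with (Neg a); [apply Der_mem, MC_Neg; auto | bool_taut].
Qed.

Lemma MC_Cond_mp a b c : G (Cond a (Imp b c)) -> G (Cond a b) -> G (Cond a c).
Proof.
  intros Hbc Hb. apply MC_Der_closed.
  apply Der_mp with (Cond a b); [|now apply Der_mem].
  apply Der_mp with (Cond a (Imp b c)); [apply Der_Prov, P_ax, A2 | now apply Der_mem].
Qed.

Lemma MC_Cond_bigconj a l :
  Forall (fun x => G (Cond a x)) l -> G (Cond a (bigconj l)).
Proof.
  induction l as [|x l IH]; intros Hl.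
  - apply MC_Der_closed, Der_Prov, P_rcn, Prov_taut. intros v. apply beval_Top.
  - inversion Hl as [|? ? Hx Hl']; subst. simpl.
    apply MC_Cond_mp with (bigconj l); [|auto].
    apply MC_Cond_mp with x; auto.
    apply MC_Der_closed, Der_Prov, P_rcn, Prov_taut. bool_taut.
Qed.

End MaxConsistent.

(** * Lindenbaum's lemma *)

Fixpoint code_Tm (t : Tm) : nat :=
  match t with
  | TConst c => Cantor.to_nat (0, c)
  | TVar x => Cantor.to_nat (1, x)
  | TApp s u => Cantor.to_nat (2, Cantor.to_nat (code_Tm s, code_Tm u))
  | TSum s u => Cantor.to_nat (3, Cantor.to_nat (code_Tm s, code_Tm u))
  | TBang s => Cantor.to_nat (4, code_Tm s)
  end.

Fixpoint code_Fm (f : Fm) : nat :=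
  match f with
  | Atom p => Cantor.to_nat (0, p)
  | Neg a => Cantor.to_nat (1, code_Fm a)
  | And a b => Cantor.to_nat (2, Cantor.to_nat (code_Fm a, code_Fm b))
  | Imp a b => Cantor.to_nat (3, Cantor.to_nat (code_Fm a, code_Fm b))
  | Cond a b => Cantor.to_nat (4, Cantor.to_nat (code_Fm a, code_Fm b))
  | Just t a => Cantor.to_nat (5, Cantor.to_nat (code_Tm t, code_Fm a))
  end.

Lemma to_nat_pair_inj a b c d :
  Cantor.to_nat (a, b) = Cantor.to_nat (c, d) -> a = c /\ b = d.
Proof. intros H. apply Cantor.to_nat_inj in H. now injection H. Qed.

Ltac decode_pairs :=
  repeat match goal with
         | H : Cantor.to_nat _ = Cantor.to_nat _ |- _ =>
             apply to_nat_pair_inj in H as [?H ?H]; try discriminate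
         end.

Lemma code_Tm_inj s t : code_Tm s = code_Tm t -> s = t.
Proof.
  revert t; induction s; intros []; cbn [code_Tm]; intros H; decode_pairs;
    f_equal; auto.
Qed.

Lemma code_Fm_inj f g : code_Fm f = code_Fm g -> f = g.
Proof.
  revert g; induction f; intros []; cbn [code_Fm]; intros H; decode_pairs;
    f_equal; auto using code_Tm_inj.
Qed.

(* Injectivity of [code_Fm] makes each stage add at most one formula. *)
Fixpoint lindenbaum_chain CS (S0 : Fm -> Prop) (n : nat) : Fm -> Prop :=
  match n with
  | 0 => S0
  | S n => fun f => lindenbaum_chain CS S0 n f \/
      (code_Fm f = n /\ Consistent CS (fun g => lindenbaum_chain CS S0 n g \/ g = f))
  end.

Lemma lindenbaum_chain_mono CS S0 m n f :
  m <= n -> lindenbaum_chain CS S0 m f -> lindenbaum_chain CS S0 n f.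
Proof. induction 1; simpl; auto. Qed.

Lemma lindenbaum_chain_consistent CS S0 n :
  Consistent CS S0 -> Consistent CS (lindenbaum_chain CS S0 n).
Proof.
  intros H0. induction n as [|n IH]; simpl; auto.
  destruct (classic (exists g, code_Fm g = n /\
              Consistent CS (fun x => lindenbaum_chain CS S0 n x \/ x = g)))
    as [[g [Hg Hc]] | Hnone].
  - eapply Consistent_sub; [|exact Hc]. intros x [Hx | [Hx _]]; auto.
    right. apply code_Fm_inj. congruence.
  - eapply Consistent_sub; [|exact IH]. intros x [Hx | Hx]; auto.
    exfalso. apply Hnone. eauto.
Qed.

Lemma Forall_lindenbaum_chain CS S0 l :
  Forall (fun f => exists n, lindenbaum_chain CS S0 n f) l ->
  exists N, Forall (lindenbaum_chain CS S0 N) l.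
Proof.
  induction 1 as [|x l [n Hx] _ [N HN]]; [now exists 0|].
  exists (Nat.max n N). constructor.
  - eapply lindenbaum_chain_mono; [apply Nat.le_max_l | exact Hx].
  - eapply Forall_impl; [|exact HN].
    intros f. apply lindenbaum_chain_mono, Nat.le_max_r.
Qed.

Lemma lindenbaum CS (S0 : Fm -> Prop) : Consistent CS S0 ->
  exists U, MaxConsistent CS U /\ forall f, S0 f -> U f.
Proof.
  intros H0. exists (fun f => exists n, lindenbaum_chain CS S0 n f).
  split; [split|].
  - apply Consistent_iff. intros [l [Hl Hp]].
    destruct (Forall_lindenbaum_chain _ _ _ Hl) as [N HN].
    apply (proj1 (Consistent_iff _ _) (lindenbaum_chain_consistent CS S0 N H0)).
    now exists l.
  - intros T' Hsub Hc f Hf. exists (S (code_Fm f)). simpl. right. split; auto.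
    eapply Consistent_sub; [|exact Hc]. intros x [Hx | ->]; eauto.
  - intros f Hf. now exists 0.
Qed.

Lemma MC_Cond_intro CS G a b : MaxConsistent CS G ->
  (forall D : Fm -> Prop, MaxConsistent CS D ->
     (forall q, G (Cond a q) -> D q) -> D b) ->
  G (Cond a b).
Proof.
  intros HG H. apply NNPP. intros Hn.
  destruct (lindenbaum CS (fun x => G (Cond a x) \/ x = Neg b)) as [D [HD Hsub]].
  - apply Consistent_iff. intros HBot.
    apply Der_deduction in HBot.
    apply Der_taut_mp with (b := b) in HBot; [|bool_taut].
    destruct HBot as [l [Hl Hp]]. apply Hn.
    apply (MC_Cond_mp CS G HG a (bigconj l)).
    + apply (MC_Der_closed CS G HG), Der_Prov, P_rcn, Hp.
    + now apply (MC_Cond_bigconj CS G HG).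
  - apply (proj1 (MC_Neg CS D HD b) (Hsub (Neg b) (or_intror eq_refl))).
    apply H; auto.
Qed.

(** * The truth lemma *)

Lemma canonical_sat_nonnormal CS (G : Fm -> Prop) f :
  ~ MaxConsistent CS G -> sat (canonical_model CS) G f <-> G f.
Proof. intros HG. destruct f; simpl; tauto. Qed.

Theorem mainTheorem8 (CS : Fm -> Prop) (HCS : is_CS CS) :
  forall (f : Fm) (G : world (canonical_model CS)),
    sat (canonical_model CS) G f <-> G f.
Proof.
  induction f as [p | a IHa | a IHa b IHb | a IHa b IHb | a IHa b IHb | t a IHa];
    intros G; destruct (classic (MaxConsistent CS G)) as [HG | HG];
    try now apply canonical_sat_nonnormal.
  all: simpl.
  - split; [intros [[_ [_ H]] | [H _]]; tauto | intros H; left; eauto].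
  - rewrite (MC_Neg _ _ HG), IHa. tauto.
  - rewrite (MC_And _ _ HG), IHa, IHb. tauto.
  - rewrite (MC_Imp _ _ HG), IHa, IHb. tauto.
  - split.
    + intros [[_ H] | [H _]]; [|contradiction].
      apply (MC_Cond_intro CS); auto. intros D HD Hq. apply IHb, H. auto.
    + intros Hab. left. split; auto. intros D [_ [_ Hq]]. now apply IHb, Hq.
  - split.
    + intros [[_ H] | [H _]]; [|contradiction].
      apply (IHa (fun q => G (Just t q))), H. auto.
    + intros Hta. left. split; auto. intros D Hq. now apply IHa, Hq.
Qed.
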